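(* A regular Lie algebra (finite-dimensional, over an infinite field $K$) which is not semisimple (i.e. has a nonzero solvable ideal) is nilpotent.
   Context: All algebras are finite-dimensional over an infinite field $K$. For $x\in L$ write $\chi_{\operatorname{ad} x}(t)=\det(t-\operatorname{ad}x)=\sum_{i}a_i(x)t^i$. The rank $\operatorname{rk}L$ is the minimal $r$ such that $a_r(x)\neq 0$ for some $x\in L$. An element $x$ is regular if $a_{\operatorname{rk}L}(x)\neq 0$. A Lie algebra is regular if each of its nonzero elements is regular. A Lie algebra is semisimple if its solvable radical is zero. *)

(* A finite-dimensional Lie algebra of dimension n over K is
   modelled (up to isomorphism) as the row space 'rV[K]_n with a bracket. *)
From HB Require Import structures.
From mathcomp Require Import all_boot all_order all_algebra.
Set Implicit Arguments. Unset Strict Implicit. Unset Printing Implicit Defensive.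
Import GRing.Theory.
Local Open Scope ring_scope.

Section Lie.
Variables (K : fieldType) (n : nat).
Variable br : 'rV[K]_n -> 'rV[K]_n -> 'rV[K]_n.

Definition is_lie_bracket : Prop :=
  [/\ (forall (a : K) x y z, br (a *: x + y) z = a *: br x z + br y z),
      (forall (a : K) x y z, br x (a *: y + z) = a *: br x y + br x z),
      (forall x, br x x = 0) &
      (forall x y z, br x (br y z) + br y (br z x) + br z (br x y) = 0)].

(* matrix of ad x (acting on row vectors) *)
Definition ad_mx (x : 'rV[K]_n) : 'M[K]_n := lin1_mx (br x).

Definition chi_coef (i : nat) (x : 'rV[K]_n) : K := (char_poly (ad_mx x))`_i.

Definition is_lie_rank (r : nat) : Prop :=
  (exists x, chi_coef r x != 0) /\ (forall s, (s < r)%N -> forall y, chi_coef s y = 0).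

Definition regular_elt (x : 'rV[K]_n) : Prop :=
  exists r, is_lie_rank r /\ chi_coef r x != 0.

Definition regular_lie : Prop := forall x, x != 0 -> regular_elt x.

(* subspaces are represented by (row spaces of) square matrices *)
(* [A, B] : span of brackets of elements of A and B; since rows span the
   spaces and the bracket is bilinear, brackets of rows suffice. *)
Definition brsp (A B : 'M[K]_n) : 'M[K]_n :=
  (\sum_(i < n) \sum_(j < n) <<br (row i A) (row j B)>>)%MS.

Definition is_ideal (I : 'M[K]_n) : Prop :=
  forall x y, (y <= I)%MS -> (br x y <= I)%MS.

Definition derived (S : 'M[K]_n) : 'M[K]_n := brsp S S.

Definition solvable_sub (S : 'M[K]_n) : Prop :=
  exists k, \rank (iter k derived S) = 0%N.

(* lower central series C^0 = L, C^{k+1} = [L, C^k] *)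
Definition lie_nilpotent : Prop :=
  exists k, \rank (iter k (brsp 1%:M) 1%:M) = 0%N.

(* not semisimple: the solvable radical is nonzero, i.e. there is a nonzero
   solvable ideal *)
Definition not_semisimple : Prop :=
  exists I, [/\ is_ideal I, solvable_sub I & \rank I != 0%N].

End Lie.

Definition infinite_field (K : fieldType) : Prop := forall s : seq K, exists x, x \notin s.

(* A nonzero solvable ideal has a last nonzero term A in its derived
   series, and A is an abelian ideal.  For a nonzero a in A the square of
   ad a maps L into [A, A] = 0, so det(t - ad a) = t^n.  Since a is regular,
   the rank of L must be n: every coefficient a_s with s < n vanishes on all
   of L, hence every ad x has characteristic polynomial t^n and is nilpotent
   by Cayley-Hamilton.  Engel's theorem then shows that L is nilpotent. *)

From HB Require Import structures.
From mathcomp Require Import all_boot all_order all_algebra.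
From mathcomp Require Import zify.
Set Implicit Arguments. Unset Strict Implicit. Unset Printing Implicit Defensive.
Import GRing.Theory.
Local Open Scope ring_scope.

Section RowSpaces.
Variable F : fieldType.

(* Linear maps between row spaces, given as plain functions (the Lie bracket
   of the statement is such a function in each argument). *)
Definition linear_fun m n (f : 'rV[F]_m -> 'rV[F]_n) : Prop :=
  forall a u v, f (a *: u + v) = a *: f u + f v.

Section Facts.
Variables (m n : nat) (f : 'rV[F]_m -> 'rV[F]_n).
Hypothesis f_lin : linear_fun f.

Lemma linear_fun0 : f 0 = 0.
Proof.
have := f_lin 1 0 0; rewrite !scale1r addr0 => /(congr1 (fun z => z - f 0)).
by rewrite subrr addrK => <-.
Qed.

Lemma linear_funZ a u : f (a *: u) = a *: f u.
Proof. by have := f_lin a u 0; rewrite linear_fun0 !addr0. Qed.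

Lemma linear_funD u v : f (u + v) = f u + f v.
Proof. by have := f_lin 1 u v; rewrite !scale1r. Qed.

Lemma linear_fun_sum I (r : seq I) P (G : I -> 'rV_m) :
  f (\sum_(i <- r | P i) G i) = \sum_(i <- r | P i) f (G i).
Proof.
elim/big_rec2: _ => [|i x y _ <-]; [exact: linear_fun0 | exact: linear_funD].
Qed.

Lemma mul_rV_lin1_fun u : u *m lin1_mx f = f u.
Proof.
rewrite [u in RHS]matrix_sum_delta big_ord1 linear_fun_sum; apply/rowP=> i.
by rewrite mxE summxE; apply: eq_bigr => j _; rewrite linear_funZ !mxE.
Qed.

End Facts.

Lemma rank_adjoin_lt m n (A : 'M[F]_(m, n)) (v : 'rV_n) :
  ~~ (v <= A)%MS -> (\rank A < \rank (A + v)%MS)%N.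
Proof.
move=> vA; apply: rank_ltmx; rewrite ltmxE addsmxSl /=.
by apply: contra vA; apply: submx_trans (addsmxSr _ _).
Qed.

End RowSpaces.

Section NilpotentDifference.
Variable V : zmodType.
Implicit Types f g : V -> V.

Definition additive_fun f : Prop := forall x y, f (x - y) = f x - f y.

Lemma additive_fun0 f : additive_fun f -> f 0 = 0.
Proof. by move=> fB; have := fB 0 0; rewrite !subrr => ->. Qed.

Lemma iter_additive f j : additive_fun f -> additive_fun (iter j f).
Proof. by move=> fB; elim: j => [//|j IH] x y /=; rewrite IH fB. Qed.

Lemma iter_commute f g j x :
  (forall y, f (g y) = g (f y)) -> iter j f (g x) = g (iter j f x).
Proof. by move=> fg; elim: j => [//|j IH] /=; rewrite IH fg. Qed.

(* If f and g are commuting additive maps with f^a v = 0 and g^b v = 0, then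
   (f - g)^(a+b) v = 0; this gives nilpotency of Z |-> ZX - XZ. *)
Lemma nilpotent_difference f g a b v :
  additive_fun f -> additive_fun g -> (forall x, f (g x) = g (f x)) ->
  iter a f v = 0 -> iter b g v = 0 -> iter (a + b) (fun x => f x - g x) v = 0.
Proof.
move=> fB gB fg; set h := fun x => f x - g x.
have hB : additive_fun h by move=> x y; rewrite /h fB gB !opprD !opprK addrACA.
elim: a b v => [|a IHa] b v.
  by move=> fv _; rewrite /= in fv; rewrite fv (additive_fun0 (iter_additive _ hB)).
elim: b v => [|b IHb] v.
  by move=> _ gv; rewrite /= in gv; rewrite gv (additive_fun0 (iter_additive _ hB)).
move=> fv gv; rewrite addSn iterSr /h iter_additive //.
have -> : iter (a + b.+1) h (f v) = 0.
  apply: IHa; first by rewrite -iterSr.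
  by rewrite (iter_commute _ _ (fun y => esym (fg y))) gv (additive_fun0 fB).
have -> : iter (a + b.+1) h (g v) = 0.
  rewrite -addSnnS; apply: IHb; last by rewrite -iterSr.
  by rewrite iter_commute // fv (additive_fun0 gB).
by rewrite subrr.
Qed.

End NilpotentDifference.

(* An identity in any abelian group, behind the Jacobi identity for matrix
   commutators. *)
Lemma zmod_rearrange (V : zmodType) (a b c d e g : V) :
  (a - b - (c - d)) - (e - c - (b - g)) = a - e - (g - d).
Proof.
rewrite !opprB !addrA.
rewrite (addrAC (a - b + d) (- c) b) (addrAC (a - b) d b) subrK.
rewrite (addrAC (a + d - c) (- g) c) subrK.
by rewrite (addrAC (a + d) (- g) (- e)) (addrAC a d (- e)).
Qed.

Section LinearEngel.
Variable F : fieldType.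

(* Nilpotency of a square matrix (stated with iterated products, since
   'M_N is a ring only for N > 0). *)
Definition nilmx N (A : 'M[F]_N) : Prop :=
  exists k, iter k (fun M : 'M_N => M *m A) 1%:M = 0.

Definition mxbr N (A B : 'M[F]_N) : 'M[F]_N := A *m B - B *m A.

(* A space of matrices, encoded by the row space of vectorized matrices,
   is a Lie algebra when it is closed under commutators. *)
Definition mx_lie_closed N p (R : 'M[F]_(p, N * N)) : Prop :=
  forall A B, (A \in R)%MS -> (B \in R)%MS -> (mxbr A B \in R)%MS.

Lemma iter_mulmxr m N (A : 'M[F]_N) k (M0 : 'M_(m, N)) :
  iter k (fun M => M *m A) M0 = M0 *m iter k (fun M : 'M_N => M *m A) 1%:M.
Proof. by elim: k => [|k IH] /=; [rewrite mulmx1 | rewrite IH mulmxA]. Qed.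

Lemma iter_mulmxl N (A : 'M[F]_N) k (M0 : 'M_N) :
  iter k (fun M => A *m M) M0 = iter k (fun M : 'M_N => M *m A) 1%:M *m M0.
Proof.
have comm j : A *m iter j (fun M : 'M_N => M *m A) 1%:M =
              iter j (fun M : 'M_N => M *m A) 1%:M *m A.
  by elim: j => [|j IH] /=; [rewrite mulmx1 mul1mx | rewrite mulmxA IH].
by elim: k => [|k IH] /=; [rewrite mul1mx | rewrite IH mulmxA comm].
Qed.

Section Commutator.
Variable N : nat.
Implicit Types A B C X Y : 'M[F]_N.

Lemma mxbrDl A B C : mxbr (A + B) C = mxbr A C + mxbr B C.
Proof. by rewrite /mxbr mulmxDl mulmxDr opprD addrACA. Qed.

Lemma mxbrDr A B C : mxbr A (B + C) = mxbr A B + mxbr A C.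
Proof. by rewrite /mxbr mulmxDl mulmxDr opprD addrACA. Qed.

Lemma mxbrZl a A B : mxbr (a *: A) B = a *: mxbr A B.
Proof. by rewrite /mxbr -scalemxAl -scalemxAr scalerBr. Qed.

Lemma mxbrZr a A B : mxbr A (a *: B) = a *: mxbr A B.
Proof. by rewrite /mxbr -scalemxAl -scalemxAr scalerBr. Qed.

Lemma mxbrxx A : mxbr A A = 0.
Proof. by rewrite /mxbr subrr. Qed.

Lemma mxbrC A B : mxbr A B = - mxbr B A.
Proof. by rewrite /mxbr opprB. Qed.

Lemma memmxD p (S : 'M[F]_(p, N * N)) A B :
  (A \in S)%MS -> (B \in S)%MS -> (A + B \in S)%MS.
Proof. by move=> *; rewrite linearD addmx_sub. Qed.

Lemma memmxZ p (S : 'M[F]_(p, N * N)) a A : (A \in S)%MS -> (a *: A \in S)%MS.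
Proof. by move=> *; rewrite linearZ scalemx_sub. Qed.

Lemma memmxN p (S : 'M[F]_(p, N * N)) A : (A \in S)%MS -> (- A \in S)%MS.
Proof. by move=> *; rewrite linearN eqmx_opp. Qed.

Definition adm X : 'M[F]_(N * N) := lin_mulmxr X - lin_mulmx X.

Lemma mul_adm M X : mxvec M *m adm X = mxvec (mxbr M X).
Proof. by rewrite /adm mulmxBr !mul_vec_lin /= linearB. Qed.

Lemma adm_linear a X Y : adm (a *: X + Y) = a *: adm X + adm Y.
Proof.
apply/eqP/mulmxP => u; rewrite -[u]vec_mxK [in RHS]mulmxDr -scalemxAr.
by rewrite !mul_adm -linearZ -linearD /= mxbrDr mxbrZr.
Qed.

Lemma adm_mxbr X Y : mxbr (adm X) (adm Y) = adm (mxbr X Y).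
Proof.
apply/eqP/mulmxP => u; rewrite -[u]vec_mxK mulmxBr !mulmxA !mul_adm.
rewrite -linearB /=; congr mxvec.
by rewrite /mxbr !(mulmxBl, mulmxBr) !mulmxA; apply: zmod_rearrange.
Qed.

Lemma adm_nil X : nilmx X -> nilmx (adm X).
Proof.
case=> k Xk; exists (k + k); apply/eqP/mulmxP => u.
rewrite mulmx0 -iter_mulmxr -[u]vec_mxK; set M := vec_mx u.
have -> j : iter j (fun z => z *m adm X) (mxvec M) =
            mxvec (iter j (fun Z : 'M_N => Z *m X - X *m Z) M).
  by elim: j => [//|j IH] /=; rewrite IH mul_adm.
rewrite (nilpotent_difference (f := fun Z : 'M_N => Z *m X) (g := fun Z => X *m Z)).
- exact: linear0.
- by move=> Y Z; rewrite mulmxBl.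
- by move=> Y Z; rewrite mulmxBr.
- by move=> Z; rewrite mulmxA.
- by rewrite iter_mulmxr Xk mulmx0.
- by rewrite iter_mulmxl Xk mul0mx.
Qed.

End Commutator.

Definition nil_stable N p (R : 'M[F]_(p, N * N)) u w
    (U : 'M[F]_(u, N)) (W : 'M[F]_(w, N)) : Prop :=
  forall A, (A \in R)%MS -> [/\ nilmx A, (U *m A <= U)%MS & (W *m A <= W)%MS].

Definition engel_vector N p (R : 'M[F]_(p, N * N)) u w
    (U : 'M[F]_(u, N)) (W : 'M[F]_(w, N)) : Prop :=
  exists v : 'rV_N, [/\ (v <= U)%MS, ~~ (v <= W)%MS &
                       forall A, (A \in R)%MS -> (v *m A <= W)%MS].

Definition engel_upto (r : nat) : Prop :=
  forall N p (R : 'M[F]_(p, N * N)) u w (U : 'M[F]_(u, N)) (W : 'M[F]_(w, N)),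
  (\rank R <= r)%N -> mx_lie_closed R -> nil_stable R U W -> ~~ (U <= W)%MS ->
  engel_vector R U W.

Lemma engel_vector_sub N p q (R : 'M[F]_(p, N * N)) (S : 'M[F]_(q, N * N))
    u w (U : 'M[F]_(u, N)) (W : 'M[F]_(w, N)) :
  (R <= S)%MS -> engel_vector S U W -> engel_vector R U W.
Proof.
by move=> RS [v [vU vW vS]]; exists v; split=> // A AR; apply/vS/(submx_trans AR).
Qed.

Lemma engel_upto0 : engel_upto 0.
Proof.
move=> N p R u w U W rR _ _ UW; have [i Ui] := row_subPn UW.
exists (row i U); split=> //; first exact: row_sub.
have -> : R = 0 by apply/eqP; rewrite -mxrank_eq0 -leqn0.
by move=> A /submx0null/eqP; rewrite mxvec_eq0 => /eqP ->; rewrite mulmx0 sub0mx.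
Qed.

Lemma stable_adm N q (S : 'M[F]_(q, N * N)) X :
  mx_lie_closed S -> (X \in S)%MS -> (S *m adm X <= S)%MS.
Proof.
move=> cS XS; apply/row_subP => i; rewrite row_mul -[row i S]vec_mxK mul_adm.
by apply: cS => //; rewrite vec_mxK row_sub.
Qed.

Lemma memmx_line N (y Y : 'M[F]_N) : (Y \in mxvec y)%MS -> exists a, Y = a *: y.
Proof. by case/sub_rVP => a; rewrite -linearZ => /(can_inj mxvecK) ->; exists a. Qed.

Lemma lie_closed_adjoin N q (H : 'M[F]_(q, N * N)) (y : 'M[F]_N) :
  mx_lie_closed H -> (forall X, (X \in H)%MS -> (mxbr y X \in H)%MS) ->
  mx_lie_closed (H + mxvec y)%MS.
Proof.
move=> cH yN A B /memmx_addsP[[X1 Y1] /= [X1H Y1y ->]].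
move=> /memmx_addsP[[X2 Y2] /= [X2H Y2y ->]].
have [[a ->] [b ->]] := (memmx_line Y1y, memmx_line Y2y).
have sH C : (C \in H)%MS -> (C \in H + mxvec y)%MS.
  by move=> CH; apply: submx_trans CH (addsmxSl _ _).
rewrite mxbrDl !mxbrDr !mxbrZl !mxbrZr mxbrxx !scaler0 addr0 (mxbrC X1 y).
apply: memmxD; first apply: memmxD; apply: sH.
- exact: cH.
- by apply/memmxZ/memmxN/yN.
- by apply/memmxZ/yN.
Qed.

(* If v0 works for H and y is nilpotent, stabilizes U and W and normalizes
   H, then iterating y on v0 yields a vector that works for H + Ky. *)
Lemma engel_vector_adjoin N q (H : 'M[F]_(q, N * N)) u w
    (U : 'M[F]_(u, N)) (W : 'M[F]_(w, N)) (y : 'M[F]_N) :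
  engel_vector H U W -> nilmx y -> (U *m y <= U)%MS -> (W *m y <= W)%MS ->
  (forall X, (X \in H)%MS -> (mxbr y X \in H)%MS) ->
  engel_vector (H + mxvec y)%MS U W.
Proof.
move=> [v0 [v0U v0W v0H]] [k yk] yU yW yN.
suff [v [vU vW vH vy]] : exists v : 'rV_N, [/\ (v <= U)%MS, ~~ (v <= W)%MS,
    forall X, (X \in H)%MS -> (v *m X <= W)%MS & (v *m y <= W)%MS].
  exists v; split=> // A /memmx_addsP[[X Y] /= [XH /memmx_line[a ->] ->]].
  by rewrite mulmxDr -scalemxAr; apply: addmx_sub; [exact: vH | exact: scalemx_sub vy].
have : (iter k (fun z => z *m y) v0 <= W)%MS by rewrite iter_mulmxr yk mulmx0 sub0mx.
elim: k v0 v0U v0W v0H {yk} => [|k IHk] v vU vW vH; first by rewrite /= (negPf vW).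
have [vyW _|vyW] := boolP (v *m y <= W)%MS; first by exists v.
rewrite iterSr; apply: IHk vyW _; first exact: submx_trans (submxMr _ vU) yU.
move=> X XH; rewrite -mulmxA.
have -> : y *m X = X *m y + mxbr y X by rewrite /mxbr addrC subrK.
rewrite mulmxDr mulmxA addmx_sub ?vH ?yN //.
exact: submx_trans (submxMr _ (vH X XH)) yW.
Qed.

Section EngelStep.
Variable r : nat.
Hypothesis IH : engel_upto r.

(* The normalizer of a proper subalgebra H of R is strictly larger than H:
   apply the induction hypothesis to the commutator action of H on R / H. *)
Lemma engel_normalizer N p q (R : 'M[F]_(p, N * N)) (H : 'M[F]_(q, N * N)) :
  mx_lie_closed R -> (forall A, (A \in R)%MS -> nilmx A) ->
  (H <= R)%MS -> mx_lie_closed H -> (\rank H <= r)%N -> ~~ (R <= H)%MS ->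
  exists y : 'M_N, [/\ (y \in R)%MS, ~~ (y \in H)%MS &
                     forall X, (X \in H)%MS -> (mxbr y X \in H)%MS].
Proof.
move=> cR nilR HR cH rH RH.
pose Phi := lin1_mx (fun x : 'rV[F]_(N * N) => mxvec (adm (vec_mx x))).
have mulPhi (X : 'M_N) : mxvec X *m Phi = mxvec (adm X).
  rewrite mul_rV_lin1_fun ?mxvecK // => a x z.
  by rewrite [vec_mx _]linearD linearZ /= adm_linear [mxvec _]linearD linearZ.
have memHPhi A : (A \in H *m Phi)%MS -> exists2 X, (X \in H)%MS & A = adm X.
  move=> /submxP[D E]; exists (vec_mx (D *m H)); first by rewrite vec_mxK submxMl.
  by apply: (can_inj mxvecK); rewrite E mulmxA -mulPhi vec_mxK.
have admH X : (X \in H)%MS -> (adm X \in H *m Phi)%MS.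
  by move=> XH; rewrite -mulPhi submxMr.
have [v [vR vH vN]] : engel_vector (H *m Phi) R H.
  apply: IH RH; first by rewrite (leq_trans (mxrankM_maxl _ _)).
    move=> A B /memHPhi[X XH ->] /memHPhi[Y YH ->].
    by rewrite adm_mxbr admH //; apply: cH.
  move=> A /memHPhi[X XH ->]; split; last exact: stable_adm.
    by apply/adm_nil/nilR; exact: submx_trans XH HR.
  by apply: stable_adm => //; apply: submx_trans HR.
exists (vec_mx v); rewrite vec_mxK; split=> // X XH.
by rewrite -mul_adm vec_mxK vN ?admH.
Qed.

Lemma engel_upto_step : engel_upto r.+1.
Proof.
move=> N p R u w U W rR cR hR UW.
have [rRr|rRr] := leqP (\rank R) r; first exact: IH.
have nilR A : (A \in R)%MS -> nilmx A by case/hR.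
(* grow a subalgebra H of R, by strong induction on the codimension *)
suff grow q (H : 'M[F]_(q, N * N)) :
    (H <= R)%MS -> mx_lie_closed H -> ~~ (R <= H)%MS -> engel_vector R U W.
  apply: (grow 1%N 0); first exact: sub0mx.
    move=> A B /submx0null/eqP; rewrite mxvec_eq0 => /eqP -> _.
    by rewrite /mxbr mul0mx mulmx0 subrr linear0 sub0mx.
  by apply/negP => /mxrankS; rewrite mxrank0 leqNgt (leq_ltn_trans _ rRr).
have [k] := ubnP (\rank R - \rank H); elim: k q H => // k IHk q H codimH HR cH RH.
have ltHR : (\rank H < \rank R)%N.
  by have /leqifP := mxrank_leqif_sup HR; rewrite (negPf RH).
have rH : (\rank H <= r)%N by lia.
have [y [yR yH yN]] := engel_normalizer cR nilR HR cH rH RH.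
have cH' := lie_closed_adjoin cH yN.
have H'R : (H + mxvec y <= R)%MS by rewrite addsmx_sub HR.
have [RH'|RH'] := boolP (R <= H + mxvec y)%MS; last first.
  apply: (IHk _ (H + mxvec y)%MS) => //.
  have := rank_adjoin_lt yH; have := mxrankS H'R; lia.
apply: engel_vector_sub RH' _; have [yn yU yW] := hR y yR.
apply: engel_vector_adjoin => //; apply: IH rH cH _ UW.
by move=> A AH; apply/hR/(submx_trans AH).
Qed.

End EngelStep.

Theorem linear_engel r : engel_upto r.
Proof. by elim: r => [|r IH]; [exact: engel_upto0 | exact: engel_upto_step]. Qed.

End LinearEngel.

Section CharPoly.
Variable K : fieldType.

Lemma char_poly_sqr0 m (M : 'M[K]_m) : M *m M = 0 -> char_poly M = 'X^m.
Proof.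
move=> MM.
have E : char_poly_mx M *m ('X%:M + map_mx polyC M) = ('X ^+ 2)%:M.
  rewrite /char_poly_mx mulmxDr !mulmxBl -map_mxM MM map_mx0 subr0.
  by rewrite -scalar_mxM mul_mx_scalar mul_scalar_mx subrK expr2.
have := congr1 determinant E; rewrite det_mulmx det_scalar -exprM => D.
have : char_poly M %| ('X - 0%:P) ^+ (2 * m) by rewrite subr0 -D /char_poly dvdp_mulIl.
case/dvdp_exp_XsubCP => k _.
rewrite subr0 eqp_monic ?char_poly_monic ?monicXn // => /eqP Ek.
have : size (char_poly M) = size ('X^k : {poly K}) by rewrite Ek.
by rewrite size_char_poly size_polyXn Ek => -[->].
Qed.

(* Cayley-Hamilton: characteristic polynomial X^m forces nilpotency. *)
Lemma nilmx_char_poly m (A : 'M[K]_m) : char_poly A = 'X^m -> nilmx A.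
Proof.
case: m A => [|m] A E; first by exists 0%N; apply: flatmx0.
exists m.+1; have -> k : iter k (fun M => M *m A) 1%:M = A ^+ k.
  by elim: k => [//|k IH] /=; rewrite IH exprSr.
by have := Cayley_Hamilton A; rewrite E rmorphXn /= horner_mx_X.
Qed.

(* The characteristic polynomial is monic of degree m, so it equals X^m
   as soon as its lower coefficients vanish. *)
Lemma char_poly_Xn m (A : 'M[K]_m) :
  (forall s, (s < m)%N -> (char_poly A)`_s = 0) -> char_poly A = 'X^m.
Proof.
move=> H; apply/polyP => i; rewrite coefXn.
case: (ltngtP i m) => [lt|gt|->].
- by rewrite H // (ltn_eqF lt).
- by rewrite nth_default ?size_char_poly // (gtn_eqF gt).
- by have := char_poly_monic A; rewrite monicE lead_coefE size_char_poly /= => /eqP ->.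
Qed.

End CharPoly.

Section Lie.
Variables (K : fieldType) (n : nat) (br : 'rV[K]_n -> 'rV[K]_n -> 'rV[K]_n).
Hypothesis Hlie : is_lie_bracket br.

Local Notation ad := (ad_mx br).

Lemma br_linl x : linear_fun (br^~ x).
Proof. by case: Hlie => linl _ _ _ a u v; apply: linl. Qed.

Lemma br_linr x : linear_fun (br x).
Proof. by case: Hlie => _ linr _ _ a u v; apply: linr. Qed.

Lemma brxx x : br x x = 0.
Proof. by case: Hlie. Qed.

Lemma jacobi x y z : br x (br y z) + br y (br z x) + br z (br x y) = 0.
Proof. by case: Hlie. Qed.

Lemma mul_ad x w : w *m ad x = br x w.
Proof. by rewrite /ad_mx mul_rV_lin1_fun //; apply: br_linr. Qed.

(* Antisymmetry, from bilinearity and [x, x] = 0. *)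
Lemma br_anti x y : br x y = - br y x.
Proof.
have := brxx (x + y).
rewrite (linear_funD (br_linl _)) !(linear_funD (br_linr _)) !brxx add0r addr0.
by move/eqP; rewrite addr_eq0 => /eqP.
Qed.

Lemma brNr x y : br x (- y) = - br x y.
Proof. by rewrite -scaleN1r (linear_funZ (br_linr _)) scaleN1r. Qed.

Lemma brNl x y : br (- x) y = - br x y.
Proof. by rewrite -scaleN1r (linear_funZ (br_linl _)) scaleN1r. Qed.

Lemma ad_linear a x y : ad (a *: x + y) = a *: ad x + ad y.
Proof. by apply/eqP/mulmxP => u; rewrite mulmxDr -scalemxAr !mul_ad (br_linl u). Qed.

(* ad is a Lie algebra morphism (for the row-vector convention): this is
   the Jacobi identity. *)
Lemma ad_mxbr x y : mxbr (ad x) (ad y) = ad (br y x).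
Proof.
apply/eqP/mulmxP => u; rewrite mulmxBr !mulmxA !mul_ad.
rewrite (br_anti y x) brNl (br_anti (br x y) u) opprK (br_anti x u) brNr.
have -> : br u (br x y) = - (br x (br y u) + br y (br u x)).
  by apply/eqP; rewrite -subr_eq0 opprK addrC jacobi.
by rewrite opprD addrC.
Qed.

Lemma brsp_sub (A B : 'M[K]_n) m (S : 'M[K]_(m, n)) :
  (forall i j, (br (row i A) (row j B) <= S)%MS) -> (brsp br A B <= S)%MS.
Proof.
by move=> H; apply/sumsmx_subP => i _; apply/sumsmx_subP => j _; rewrite genmxE.
Qed.

Lemma brsp_mulmx_sub (A B M : 'M[K]_n) m (S : 'M[K]_(m, n)) :
  (forall i j, (br (row i A) (row j B) *m M <= S)%MS) -> (brsp br A B *m M <= S)%MS.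
Proof.
move=> H; rewrite /brsp sumsmxMr; apply/sumsmx_subP => i _.
by rewrite sumsmxMr; apply/sumsmx_subP => j _; rewrite (eqmxMr _ (genmxE _)).
Qed.

Lemma brsp_mem (A B : 'M[K]_n) u v :
  (u <= A)%MS -> (v <= B)%MS -> (br u v <= brsp br A B)%MS.
Proof.
have gen i j : (br (row i A) (row j B) <= brsp br A B)%MS.
  by apply: (sumsmx_sup i) => //; apply: (sumsmx_sup j) => //; rewrite genmxE.
have memr j u' : (u' <= A)%MS -> (br u' (row j B) <= brsp br A B)%MS.
  move=> u'A; rewrite br_anti -mul_ad eqmx_opp.
  apply: submx_trans (submxMr _ u'A) _; apply/row_subP => i.
  by rewrite row_mul mul_ad br_anti eqmx_opp gen.
move=> uA vB; rewrite -mul_ad; apply: submx_trans (submxMr _ vB) _.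
by apply/row_subP => j; rewrite row_mul mul_ad memr.
Qed.

(* The derived algebra of an ideal is an ideal (Jacobi identity). *)
Lemma ideal_derived I : is_ideal br I -> is_ideal br (derived br I).
Proof.
move=> hI x y yD; rewrite -mul_ad; apply: submx_trans (submxMr _ yD) _.
apply: brsp_mulmx_sub => i j; rewrite mul_ad.
have aI : (row i I <= I)%MS by apply: row_sub.
have bI : (row j I <= I)%MS by apply: row_sub.
have -> : br x (br (row i I) (row j I)) =
          - (br (row i I) (br (row j I) x) + br (row j I) (br x (row i I))).
  by apply/eqP; rewrite -subr_eq0 opprK addrA jacobi.
rewrite eqmx_opp; apply: addmx_sub; apply: brsp_mem => //; last exact: hI.
by rewrite br_anti eqmx_opp hI.
Qed.

Lemma iter_mono m (A B : 'M[K]_n) : (A <= B)%MS ->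
  (iter m (brsp br 1%:M) A <= iter m (brsp br 1%:M) B)%MS.
Proof.
move=> AB; elim: m => [//|m IH] /=; apply: brsp_sub => i j.
by apply: brsp_mem; [exact: row_sub | exact: submx_trans (row_sub j _) IH].
Qed.

(* The last nonzero term of the derived series of a nonzero solvable ideal
   is a nonzero abelian ideal. *)
Lemma abelian_ideal : not_semisimple br ->
  exists A : 'M_n, [/\ is_ideal br A, derived br A = 0 & \rank A != 0%N].
Proof.
move=> [I [hI [k Ik] rI]].
have ex : exists k, \rank (iter k (derived br) I) == 0%N by exists k; rewrite Ik.
case: (ex_minnP ex) => -[|m] Hm Hmin; first by rewrite (eqP Hm) in rI.
exists (iter m (derived br) I); split.
- by elim: (m) => [//|j IH] /=; apply: ideal_derived.
- by apply/eqP; rewrite -mxrank_eq0.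
- by apply/negP => /Hmin; rewrite ltnn.
Qed.

(* In an abelian ideal A, (ad a)^2 maps L into [A, A] = 0. *)
Lemma ad_sqr_abelian (A : 'M_n) a : is_ideal br A -> derived br A = 0 ->
  (a <= A)%MS -> ad a *m ad a = 0.
Proof.
move=> hA dA aA; apply/eqP/mulmxP => u; rewrite mulmx0 mulmxA !mul_ad.
have : (br a (br a u) <= derived br A)%MS.
  by apply: brsp_mem => //; rewrite br_anti eqmx_opp hA.
by rewrite dA submx0 => /eqP.
Qed.

(* If a regular element has characteristic polynomial t^n, then the rank
   of L is n, so every ad x is nilpotent. *)
Lemma ad_nil_of_regular a : regular_lie br -> a != 0 -> char_poly (ad a) = 'X^n ->
  forall x, nilmx (ad x).
Proof.
move=> Hreg anz cha x; have [r [[_ Hr] ca]] := Hreg a anz.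
have rn : r = n.
  by move: ca; rewrite /chi_coef cha coefXn; case: (eqVneq r n) => // _; rewrite eqxx.
by apply/nilmx_char_poly/char_poly_Xn => s sn; apply: Hr; rewrite rn.
Qed.

Definition lcs_vanishes (W : 'M[K]_n) : Prop :=
  exists m, \rank (iter m (brsp br 1%:M) W) = 0%N.

(* Inductive step of Engel's theorem for L: given an ideal W whose lower central series
   vanishes and W <> L, the linear Engel theorem applied to ad L acting on
   L / W gives v outside W with [L, v] in W, and W + Kv is a larger such
   ideal. *)
Lemma ideal_extend (W : 'M[K]_n) : (forall x, nilmx (ad x)) ->
  is_ideal br W -> lcs_vanishes W -> (\rank W < n)%N ->
  exists W' : 'M_n, [/\ is_ideal br W', lcs_vanishes W' & (\rank W < \rank W')%N].
Proof.
move=> nilad sW [q Wq] rW.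
pose R := lin1_mx (fun x : 'rV[K]_n => mxvec (ad x)).
have mulR x : x *m R = mxvec (ad x).
  by apply: mul_rV_lin1_fun => c u v; rewrite ad_linear linearD linearZ.
have memR A : (A \in R)%MS -> exists x, A = ad x.
  by move=> /submxP[D E]; exists D; apply: (can_inj mxvecK); rewrite E mulR.
have adR x : (ad x \in R)%MS by rewrite -mulR submxMl.
have cR : mx_lie_closed R by move=> A B /memR[x ->] /memR[y ->]; rewrite ad_mxbr.
have WL x : (W *m ad x <= W)%MS.
  by apply/row_subP => i; rewrite row_mul mul_ad sW // row_sub.
have [v [_ vW vN]] : engel_vector R 1%:M W.
  apply: linear_engel (leqnn _) cR _ _.
    by move=> A /memR[x ->]; split; [exact: nilad | exact: submx1 | exact: WL].
  by apply/negP => /mxrankS; rewrite mxrank1 leqNgt rW.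
have brWv x y : (y <= W + v)%MS -> (br x y <= W)%MS.
  move=> yWv; rewrite -mul_ad; apply: submx_trans (submxMr _ yWv) _.
  by rewrite addsmxMr addsmx_sub WL vN.
exists (W + v)%MS; split.
- by move=> x y /brWv/submx_trans; apply; apply: addsmxSl.
- exists q.+1; apply/eqP; rewrite -leqn0 (leq_trans _ (eq_leq Wq)) //.
  rewrite iterSr mxrankS // iter_mono //.
  by apply: brsp_sub => i j; apply/brWv/row_sub.
- exact: rank_adjoin_lt.
Qed.

(* Engel's theorem: if every ad x is nilpotent then L is nilpotent, by
   enlarging ideals with vanishing lower central series until they fill L. *)
Lemma engel_lie : (forall x, nilmx (ad x)) -> lie_nilpotent br.
Proof.
move=> nilad.
suff grow W : is_ideal br W -> lcs_vanishes W -> lie_nilpotent br.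
  apply: (grow 0); last by exists 0%N; rewrite mxrank0.
  by move=> x y /submx0null ->; rewrite (linear_fun0 (br_linr x)) sub0mx.
have [k] := ubnP (n - \rank W); elim: k W => // k IHk W codimW sW [q Wq].
have [rW|rW] := ltnP (\rank W) n.
  have [W' [sW' lW' ltWW']] := ideal_extend nilad sW (ex_intro _ q Wq) rW.
  by apply: IHk sW' lW'; have := rank_leq_col W'; lia.
have W1 : (1%:M <= W)%MS by apply: submx_full; rewrite /row_full eqn_leq rW rank_leq_col.
exists q; apply/eqP; rewrite -leqn0 (leq_trans _ (eq_leq Wq)) //.
by rewrite mxrankS // iter_mono.
Qed.

End Lie.

Theorem lemma3 (K : fieldType) (n : nat) (br : 'rV[K]_n -> 'rV[K]_n -> 'rV[K]_n) :
  infinite_field K -> is_lie_bracket br -> regular_lie br -> not_semisimple br ->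
  lie_nilpotent br.
Proof.
move=> _ Hlie Hreg Hns.
have [A [hA dA rA]] := abelian_ideal Hlie Hns.
have [a aA anz] : exists2 a : 'rV_n, (a <= A)%MS & a != 0.
  by apply/rowV0Pn; rewrite -mxrank_eq0.
apply: (engel_lie Hlie); apply: (ad_nil_of_regular Hreg anz).
exact/char_poly_sqr0/(ad_sqr_abelian Hlie hA dA aA).
Qed.
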